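(* Let $T,Z$ be random variables on finite sets with joint distribution $P_{TZ}=P_U$ on $\mathcal U=\mathcal T\times\mathcal Z$, let $W(y|x)$ be a channel from a finite set $\mathcal X$ to a finite set $\mathcal Y$, and $Q$ a distribution on $\mathcal X$. Let \[ E=\min_{\hat P_U}\min_{\hat P_{XY}} D(\hat P_U\|P_U)+D(\hat P_{XY}\|QW)+\Big[\min_{\tilde P_U\in\mathcal K_s(\hat P_U)}\min_{\tilde P_{XY}\in\mathcal K_c(\hat P_{XY})} D(\tilde P_{XY}\|Q\hat P_Y)-H(\tilde P_{T|Z})\Big]^+, \] where $\mathcal K_s(\hat P_U)=\{\tilde P_U:\tilde P_Z=\hat P_Z,\ \mathbb E_{\tilde P}\log P_U(U)\ge \mathbb E_{\hat P}\log P_U(U)\}$ and $\mathcal K_c(\hat P_{XY})=\{\tilde P_{XY}:\tilde P_Y=\hat P_Y,\ \mathbb E_{\tilde P}\log W(Y|X)\ge\mathbb E_{\hat P}\log W(Y|X)\}$. Then \[ E\ge \min_{\hat P_U}\min_{\hat P_{XY}} D(\hat P_U\|P_U)+D(\hat P_{XY}\|QW)+\Big[D(\hat P_{XY}\|Q\hat P_Y)-H(\hat P_{T|Z})\Big]^+. \]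
   Context: Minimizations over $\hat P_U$, $\tilde P_U$ range over distributions on $\mathcal U$ and over $\hat P_{XY},\tilde P_{XY}$ over distributions on $\mathcal X\times\mathcal Y$. $[x]^+=\max\{0,x\}$; $QW$ denotes $Q(x)W(y|x)$; $Q\hat P_Y$ denotes $Q(x)\hat P_Y(y)$ with $\hat P_Y$ the $Y$-marginal of $\hat P_{XY}$; $\hat P_Z$ is the $Z$-marginal; $H(\tilde P_{T|Z})$ is the conditional entropy of $T$ given $Z$ under $\tilde P_U$. *)

From HB Require Import structures.
From mathcomp Require Import all_boot all_order all_algebra.
From mathcomp Require Import all_classical all_reals.
From mathcomp Require Import ereal exp.
Set Implicit Arguments. Unset Strict Implicit. Unset Printing Implicit Defensive.
Import Order.TTheory GRing.Theory Num.Theory.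
Local Open Scope classical_set_scope.
Local Open Scope ring_scope.

Section Defs.
Variable R : realType.

Definition isdist (A : finType) (p : A -> R) : Prop :=
  (forall a, 0 <= p a) /\ \sum_(a : A) p a = 1.

Definition elog (x : R) : \bar R := if 0 < x then (ln x)%:E else -oo%E.

(* relative entropy D(p||q) (natural log), convention 0 log 0 = 0, +oo if
   p is not absolutely continuous w.r.t. q *)
Definition relD (A : finType) (p q : A -> R) : \bar R :=
  (\sum_(a : A | (0 < p a)%R) (p a)%:E * ((ln (p a))%:E - elog (q a)))%E.

Definition Elog (A : finType) (p f : A -> R) : \bar R :=
  (\sum_(a : A | (0 < p a)%R) (p a)%:E * elog (f a))%E.

Definition margZ (T Z : finType) (p : T * Z -> R) (z : Z) : R :=
  \sum_(t : T) p (t, z).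
Definition margY (X Y : finType) (p : X * Y -> R) (y : Y) : R :=
  \sum_(x : X) p (x, y).

Definition QW (X Y : finType) (Q : X -> R) (W : X -> Y -> R) (u : X * Y) : R :=
  Q u.1 * W u.1 u.2.
Definition QPY (X Y : finType) (Q : X -> R) (p : X * Y -> R) (u : X * Y) : R :=
  Q u.1 * margY p u.2.

Definition condH (T Z : finType) (p : T * Z -> R) : R :=
  - \sum_(u : T * Z | 0 < p u) p u * ln (p u / margZ p u.2).

Definition Ks (T Z : finType) (PU pU : T * Z -> R) : set (T * Z -> R) :=
  [set q | isdist q /\ (forall z, margZ q z = margZ pU z)
           /\ (Elog pU PU <= Elog q PU)%E].
Definition Kc (X Y : finType) (W : X -> Y -> R) (pXY : X * Y -> R)
  : set (X * Y -> R) :=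
  [set q | isdist q /\ (forall y, margY q y = margY pXY y)
           /\ (Elog pXY (fun u => W u.1 u.2) <= Elog q (fun u => W u.1 u.2))%E].

Definition posp (x : \bar R) : \bar R := Order.max x 0%E.

Definition E_exp (T Z X Y : finType) (PU : T * Z -> R) (Q : X -> R)
  (W : X -> Y -> R) : \bar R :=
  ereal_inf [set e | exists pU pXY, isdist pU /\ isdist pXY /\
    e = (relD pU PU + relD pXY (QW Q W) +
         posp (ereal_inf [set f | exists qU qXY,
                  Ks PU pU qU /\ Kc W pXY qXY /\
                  f = (relD qXY (QPY Q pXY) - (condH qU)%:E)%E]))%E].

Definition E_rhs (T Z X Y : finType) (PU : T * Z -> R) (Q : X -> R)
  (W : X -> Y -> R) : \bar R :=
  ereal_inf [set e | exists pU pXY, isdist pU /\ isdist pXY /\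
    e = (relD pU PU + relD pXY (QW Q W) +
         posp (relD pXY (QPY Q pXY) - (condH pU)%:E))%E].
End Defs.

From mathcomp Require Import all_boot all_order all_algebra.
From mathcomp Require Import all_classical all_reals.
From mathcomp Require Import ereal exp.
From mathcomp Require Import ring lra.
Import Order.TTheory GRing.Theory Num.Theory.
Local Open Scope ring_scope.
Set Implicit Arguments. Unset Strict Implicit.

(** For a pair p = (p_U, p_XY) write phi(p) = D(p_U||P_U) + D(p_XY||QW) and
    psi(p) = D(p_XY||Q p_Y) - H(p_{T|Z}), so that the right-hand side is the
    infimum of phi + [psi]^+.  The chain rules give
      phi(p) - psi(p) = -H(p_Z) - E_p log P_U - H(p_Y) - E_p log W,
    hence for q = (q_U, q_XY) in K_s(p_U) x K_c(p_XY) (same marginals, larger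
    log-likelihoods) phi(q) - psi(q) <= phi(p) - psi(p).  So either
    psi(p) <= psi(q) and p itself is a good candidate, or phi(q) < phi(p) and q
    is one: in both cases the right-hand side is at most phi(p) + [psi(q)]^+,
    and [_]^+ commutes with the infimum over q. *)

Section FiniteEntropy.
Variable R : realType.
Implicit Types A : finType.

Definition abscont A (p q : A -> R) := forall a, 0 < p a -> 0 < q a.

Definition relDr A (p q : A -> R) : R :=
  \sum_(a | 0 < p a) p a * (ln (p a) - ln (q a)).

Definition Elogr A (p f : A -> R) : R := \sum_(a | 0 < p a) p a * ln (f a).

Definition negentropy A (p : A -> R) : R := \sum_a p a * ln (p a).

Lemma relD_term_neqNy A (p q : A -> R) a : 0 < p a ->
  ((p a)%:E * ((ln (p a))%:E - elog (q a)) != -oo)%E.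
Proof.
move=> pa; rewrite /elog; case: ifP => _; first by rewrite -EFinB -EFinM.
by rewrite /= addey // gt0_muley // lte_fin.
Qed.

Lemma sum_neqNy A (P : pred A) (F : A -> \bar R) :
  (forall a, P a -> F a != -oo)%E -> (\sum_(a | P a) F a != -oo)%E.
Proof.
move=> FP; apply: (big_ind (fun x => x != -oo)%E) => //.
by move=> [x| |] [y| |].
Qed.

Lemma relD_neqNy A (p q : A -> R) : (relD p q != -oo)%E.
Proof. by apply: sum_neqNy => a; apply: relD_term_neqNy. Qed.

Lemma relD_abscont A (p q : A -> R) : abscont p q -> relD p q = (relDr p q)%:E.
Proof.
move=> pq; rewrite /relD -sumEFin; apply: eq_bigr => a pa.
by rewrite /elog (pq a pa) -EFinB -EFinM.
Qed.

Lemma relD_pinfty A (p q : A -> R) : ~ abscont p q -> relD p q = +oo%E.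
Proof.
move=> /existsNP[a /not_implyP[pa /negP/negbTE qa]].
rewrite /relD (bigD1 a) //= /elog qa /= addey // gt0_muley ?lte_fin // addye //.
by apply: sum_neqNy => b /andP[pb _]; apply: relD_term_neqNy.
Qed.

Lemma Elog_abscont A (p f : A -> R) : abscont p f -> Elog p f = (Elogr p f)%:E.
Proof.
move=> pf; rewrite /Elog -sumEFin; apply: eq_bigr => a pa.
by rewrite /elog (pf a pa) -EFinM.
Qed.

Lemma Elog_Ny A (p f : A -> R) : ~ abscont p f -> Elog p f = -oo%E.
Proof.
move=> /existsNP[a /not_implyP[pa /negP/negbTE fa]].
by rewrite /Elog (bigD1 a) //= /elog fa gt0_muleNy ?lte_fin.
Qed.

Lemma abscont_Elog_le A (p q f : A -> R) :
  abscont p f -> (Elog p f <= Elog q f)%E -> abscont q f.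
Proof.
move=> pf; have [//|qf] := pselect (abscont q f).
by rewrite Elog_abscont // Elog_Ny // leeNy_eq.
Qed.

Lemma ge0_mulr_gt0 (a b : R) : 0 <= a -> 0 <= b -> 0 < a * b -> 0 < a /\ 0 < b.
Proof.
rewrite !le_eqVlt => /predU1P[<-|a0]; first by rewrite mul0r ltxx.
by move=> _; rewrite pmulr_rgt0.
Qed.

Lemma le_sum_fst (B C : finType) (r : B * C -> R) b c :
  (forall u, 0 <= r u) -> r (b, c) <= \sum_b' r (b', c).
Proof. by move=> r0; rewrite (bigD1 b) //= lerDl sumr_ge0. Qed.

Lemma sum_pos_mul_snd (B C : finType) (r : B * C -> R) (g : C -> R) :
  (forall u, 0 <= r u) ->
  \sum_(u | 0 < r u) r u * g u.2 = \sum_c (\sum_b r (b, c)) * g c.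
Proof.
move=> r0; rewrite big_mkcond /=.
rewrite (eq_bigr (fun u => r (u.1, u.2) * g u.2)); last first.
  move=> [b c] _ /=; case: ifP => // /negbT; rewrite lt_def r0 andbT negbK.
  by move=> /eqP->; rewrite mul0r.
rewrite -(pair_bigA _ (fun b c => r (b, c) * g c)) /= exchange_big /=.
by apply: eq_bigr => c _; rewrite big_distrl.
Qed.

Lemma relDr_add_condH (T Z : finType) (p PU : T * Z -> R) :
  (forall u, 0 <= p u) ->
  relDr p PU + condH p = negentropy (margZ p) - Elogr p PU.
Proof.
move=> p0; rewrite /negentropy -(sum_pos_mul_snd (fun z => ln (margZ p z)) p0).
rewrite /relDr /condH /Elogr -!sumrB; apply: eq_bigr => -[t z] pu /=.
have pz : 0 < margZ p z by apply: lt_le_trans pu (le_sum_fst t z p0).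
by rewrite ln_div ?posrE //; ring.
Qed.

Lemma relDr_QW_sub_QPY (X Y : finType) (r : X * Y -> R) (Q : X -> R)
    (W : X -> Y -> R) :
  (forall u, 0 <= r u) -> (forall x, 0 <= Q x) -> (forall x y, 0 <= W x y) ->
  abscont r (QW Q W) ->
  relDr r (QW Q W) - relDr r (QPY Q r) =
  negentropy (margY r) - Elogr r (fun u => W u.1 u.2).
Proof.
move=> r0 Q0 W0 rQW.
rewrite /negentropy -(sum_pos_mul_snd (fun y => ln (margY r y)) r0).
rewrite /relDr /Elogr -!sumrB; apply: eq_bigr => -[x y] pu /=.
have [Qx Wxy] := ge0_mulr_gt0 (Q0 x) (W0 x y) (rQW _ pu).
have ry : 0 < margY r y by apply: lt_le_trans pu (le_sum_fst x y r0).
by rewrite /QW /QPY /= !lnM ?posrE //; ring.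
Qed.

Lemma abscont_QPY (X Y : finType) (r : X * Y -> R) (Q : X -> R)
    (W : X -> Y -> R) :
  (forall u, 0 <= r u) -> (forall x, 0 <= Q x) -> (forall x y, 0 <= W x y) ->
  abscont r (QW Q W) -> abscont r (QPY Q r).
Proof.
move=> r0 Q0 W0 rQW [x y] pu.
have [Qx _] := ge0_mulr_gt0 (Q0 x) (W0 x y) (rQW _ pu).
by rewrite /QPY mulr_gt0 //; apply: lt_le_trans pu (le_sum_fst x y r0).
Qed.

Lemma abscont_QW (X Y : finType) (r p : X * Y -> R) (Q : X -> R)
    (W : X -> Y -> R) :
  (forall x, 0 <= Q x) -> (forall y, 0 <= margY p y) ->
  abscont r (QPY Q p) -> abscont r (fun u => W u.1 u.2) -> abscont r (QW Q W).
Proof.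
move=> Q0 pY0 rQp rW [x y] pu.
have [Qx _] := ge0_mulr_gt0 (Q0 x) (pY0 y) (rQp _ pu).
by rewrite /QW mulr_gt0 // (rW _ pu).
Qed.

End FiniteEntropy.

Section PositivePart.
Variable R : realType.
Local Open Scope ereal_scope.

Lemma adde_neqNy (x y : \bar R) : x != -oo -> y != -oo -> x + y != -oo.
Proof. by case: x => [a| |]; case: y. Qed.

Lemma posp_ge0 (x : \bar R) : 0 <= posp x.
Proof. by rewrite /posp le_max lexx orbT. Qed.

Lemma posp_neqNy (x : \bar R) : posp x != -oo.
Proof. by apply: contraTN (posp_ge0 x) => /eqP->; rewrite leeNy_eq. Qed.

Lemma posp_EFin (r : R) : posp r%:E = (Num.max r 0)%:E.
Proof. by rewrite /posp EFin_max. Qed.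

Lemma le_addr_posp_ereal_inf (x c : \bar R) (S : set (\bar R)) : c != -oo ->
  (forall f, S f -> x <= c + posp f) -> x <= c + posp (ereal_inf S).
Proof.
case: c => [r| |] // _ xS; last by rewrite addye ?posp_neqNy // leey.
have [xr|rx] := leP x r%:E; first by rewrite (le_trans xr) // leeDl ?posp_ge0.
rewrite -leeBlDl // (@le_trans _ _ (ereal_inf S)) ?le_max ?lexx //.
apply: le_ereal_inf_tmp => f Sf; move: (xS f Sf); rewrite -leeBlDl // /posp.
by case: (leP f 0) => // f0; rewrite leeBlDl // adde0 leNgt rx.
Qed.

Lemma le_addr_posp_trade (x : \bar R) (phip psip phiq psiq : R) :
  x <= (phip + Num.max psip 0)%:E -> x <= (phiq + Num.max psiq 0)%:E ->
  (phiq - psiq <= phip - psip)%R -> x <= (phip + Num.max psiq 0)%:E.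
Proof.
move=> xp xq trade; have [pq|qp] := leP psip psiq.
  by rewrite (le_trans xp) // lee_fin lerD2l ge_max !le_max pq lexx !orbT.
by rewrite (le_trans xq) // lee_fin; lra.
Qed.

End PositivePart.

Section Exponent.
Variables (R : realType) (T Z X Y : finType).
Variables (PU : T * Z -> R) (Q : X -> R) (W : X -> Y -> R).
Hypotheses (Q0 : forall x, 0 <= Q x) (W0 : forall x y, 0 <= W x y).

Lemma phi_sub_psi_le (pU qU : T * Z -> R) (pXY qXY : X * Y -> R) :
  (forall u, 0 <= pU u) -> (forall u, 0 <= qU u) ->
  (forall u, 0 <= pXY u) -> (forall u, 0 <= qXY u) ->
  abscont pXY (QW Q W) -> abscont qXY (QW Q W) ->
  (forall z, margZ qU z = margZ pU z) -> (forall y, margY qXY y = margY pXY y) ->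
  Elogr pU PU <= Elogr qU PU ->
  Elogr pXY (fun u => W u.1 u.2) <= Elogr qXY (fun u => W u.1 u.2) ->
  relDr qU PU + relDr qXY (QW Q W) - (relDr qXY (QPY Q qXY) - condH qU) <=
  relDr pU PU + relDr pXY (QW Q W) - (relDr pXY (QPY Q pXY) - condH pU).
Proof.
move=> pU0 qU0 pXY0 qXY0 hp hq mZ mY EU EW.
have := relDr_add_condH PU pU0; have := relDr_add_condH PU qU0.
have := relDr_QW_sub_QPY pXY0 Q0 W0 hp; have := relDr_QW_sub_QPY qXY0 Q0 W0 hq.
have -> : margZ qU = margZ pU by apply: funext.
have -> : margY qXY = margY pXY by apply: funext.
lra.
Qed.

Local Open Scope ereal_scope.

Lemma E_rhs_le_objective (pU : T * Z -> R) (pXY : X * Y -> R) :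
  isdist pU -> isdist pXY ->
  E_rhs PU Q W <= relD pU PU + relD pXY (QW Q W) +
                  posp (relD pXY (QPY Q pXY) - (condH pU)%:E).
Proof. by move=> pUd pXYd; apply: ereal_inf_lbound; exists pU, pXY. Qed.

Lemma E_rhs_le_Ks_Kc (pU qU : T * Z -> R) (pXY qXY : X * Y -> R) :
  isdist pU -> isdist pXY -> Ks PU pU qU -> Kc W pXY qXY ->
  E_rhs PU Q W <= relD pU PU + relD pXY (QW Q W) +
                  posp (relD qXY (QPY Q pXY) - (condH qU)%:E).
Proof.
move=> pUd pXYd [qUd [mZ EU]] [qXYd [mY EW]].
move: (pUd) (qUd) (pXYd) (qXYd) => [pU0 _] [qU0 _] [pXY0 _] [qXY0 _].
have eQ : QPY Q qXY = QPY Q pXY by apply: funext => u; rewrite /QPY mY.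
have Vp := E_rhs_le_objective pUd pXYd.
have Vq := E_rhs_le_objective qUd qXYd; rewrite -eQ.
have [hU|/relD_pinfty->] := pselect (abscont pU PU); last first.
  by rewrite addye ?relD_neqNy // addye ?posp_neqNy // leey.
have [hXY|/relD_pinfty->] := pselect (abscont pXY (QW Q W)); last first.
  by rewrite addey ?relD_neqNy // addye ?posp_neqNy // leey.
have [hq|/relD_pinfty->] := pselect (abscont qXY (QPY Q qXY)); last first.
  by rewrite /= addye // /posp maxye addey ?adde_neqNy ?relD_neqNy // leey.
have hqU := abscont_Elog_le hU EU.
have hpW : abscont pXY (fun u => W u.1 u.2).
  by move=> [x y] /hXY /(ge0_mulr_gt0 (Q0 x) (W0 x y))[].
have hqW := abscont_Elog_le hpW EW.
have hqQW : abscont qXY (QW Q W).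
  by apply: abscont_QW Q0 _ hq hqW => y; apply: sumr_ge0.
have hpQP := abscont_QPY pXY0 Q0 W0 hXY.
rewrite !relD_abscont // in Vp Vq *; rewrite !Elog_abscont // !lee_fin in EU EW.
rewrite -!EFinB !posp_EFin -!EFinD in Vp Vq *.
apply: le_addr_posp_trade Vp Vq _.
exact: phi_sub_psi_le.
Qed.

End Exponent.
Unset Implicit Arguments. Set Strict Implicit.

Theorem lemma4 (R : realType) (T Z X Y : finType)
  (PU : T * Z -> R) (Q : X -> R) (W : X -> Y -> R) :
  isdist PU -> isdist Q -> (forall x, isdist (W x)) ->
  (E_rhs PU Q W <= E_exp PU Q W)%E.
Proof.
move=> _ [Q0 _] Wd.
have W0 x y : 0 <= W x y by case: (Wd x).
apply: le_ereal_inf_tmp => _ [pU [pXY [pUd [pXYd ->]]]].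
apply: le_addr_posp_ereal_inf; first by rewrite adde_neqNy ?relD_neqNy.
move=> _ [qU [qXY [KqU [KqXY ->]]]].
exact: E_rhs_le_Ks_Kc.
Qed.
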